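(* Let $N\geq 3$, $p>1$, $m\in\mathbb N$ and $\alpha_p:=\max\left\{0,\frac{p(N-2)-(N+2)}{2}\right\}$. For $\alpha>\alpha_p$ let $\widehat\Lambda_i(\alpha):=\widehat\Lambda_{i,\alpha}$, $i=1,\dots,m$, be the negative radial eigenvalues (in increasing order) of $$-\Delta\varphi-p|x|^\alpha|u_\alpha|^{p-1}\varphi=\widehat\Lambda\frac{\varphi}{|x|^2},\qquad\varphi\in H^1_0(B^N),$$ where $u_\alpha$ is the unique radial solution of $-\Delta u=|x|^\alpha|u|^{p-1}u$ in $B^N$, $u=0$ on $\partial B^N$, with exactly $m$ nodal sets and $u_\alpha(0)>0$; these are $C^1$ functions of $\alpha$ on $(\alpha_p,\infty)$. Let $\lambda_1<\cdots<\lambda_m<0$ and $\mu_i$ be as in the context. Then, as $\alpha\to\infty$, $$\widehat\Lambda_i(\alpha)=\frac{\lambda_i}{4}\alpha^2+c_i\alpha+o(\alpha)\quad\text{and}\quad\widehat\Lambda_i'(\alpha)=\frac{\lambda_i}{2}\alpha+c_i+o(1),$$ where $c_i=\frac{(N-2)\mu_i'(2)}{2}+\lambda_i$, $i=1,\dots,m$.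
   Context: $B^N\subset\mathbb R^N$ is the open unit ball centered at the origin; nodal sets are connected components of the set where a function does not vanish. For $M\geq2$, $H^1_{0,M}$ is the Hilbert space of measurable $w:[0,1]\to\mathbb R$ with first order weak derivative, $w(1)=0$ and $\int_0^1|w'|^2t^{M-1}dt+\int_0^1w^2t^{M-3}dt<\infty$. For $M\geq2$ with $p(M-2)<M+2$, let $v_M$ be the unique solution with $m$ nodal sets of $-v''-\frac{M-1}{t}v'=|v|^{p-1}v$ in $(0,1)$, $v(0)>0$, $v'(0)=v(1)=0$, and let $\mu_1(M)<\cdots<\mu_m(M)<0$ be the $m$ negative eigenvalues of $-\psi''-\frac{M-1}{t}\psi'-p|v_M|^{p-1}\psi=\mu\frac{\psi}{t^2}$ in $(0,1)$, $\psi\in H^1_{0,M}$. One has $\mu_i(M_\alpha)=\left(\frac{2}{\alpha+2}\right)^2\widehat\Lambda_i(\alpha)$ with $M_\alpha=\frac{2(\alpha+N)}{\alpha+2}$, the maps $M\mapsto\mu_i(M)$ are $C^1$ (including at $M=2$, with $\mu_i'(2)$ the derivative at $2$), and $\lambda_i:=\mu_i(2)$, which are the negative radial eigenvalues of $-\Delta\psi-p|w|^{p-1}\psi=\lambda\psi/|y|^2$ in $B^2\setminus\{0\}$, $\psi=0$ on $\partial B^2$, where $w=v_2$ is the radial solution of the two-dimensional Lane–Emden problem $-\Delta w=|w|^{p-1}w$ in the unit disk $B^2$, $w=0$ on $\partial B^2$, with $m$ nodal sets and $w(0)>0$. *)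

From HB Require Import structures.
From mathcomp Require Import all_boot all_order all_algebra.
From mathcomp Require Import all_classical all_reals all_analysis.
Set Implicit Arguments. Unset Strict Implicit. Unset Printing Implicit Defensive.
Import Order.TTheory GRing.Theory Num.Theory.
Import numFieldNormedType.Exports.
Local Open Scope classical_set_scope.
Local Open Scope ring_scope.

Section Defs.
Variable R : realType.

(* Classical members of H^1_{0,M}: psi is C^1-differentiable on (0,1)
   (so its weak derivative is derive1 psi), continuous on (0,1] with psi(1)=0,
   and int_0^1 |psi'|^2 t^(M-1) dt < oo, int_0^1 psi^2 t^(M-3) dt < oo. *)
Definition H10M_diff (M : R) (psi : R -> R) : Prop :=
  [/\ (forall t : R, 0 < t < 1 -> derivable psi t 1),
      {within `]0, 1], continuous psi},
      psi 1 = 0,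
      (@lebesgue_measure R).-integrable `]0, 1[
          (fun t => ((derive1 psi t) ^+ 2 * t `^ (M - 1))%:E)
    & (@lebesgue_measure R).-integrable `]0, 1[
          (fun t => ((psi t) ^+ 2 * t `^ (M - 3))%:E)].

Definition sing_eigenvalue (M : R) (a : R -> R) (lam : R) : Prop :=
  exists psi : R -> R,
    [/\ H10M_diff M psi,
        (exists t : R, 0 < t < 1 /\ psi t != 0)
      & forall t : R, 0 < t < 1 ->
          derivable (derive1 psi) t 1 /\
          - derive1 (derive1 psi) t - (M - 1) / t * derive1 psi t - a t * psi t
            = lam * psi t / t ^+ 2].

Definition neg_eigenvalues (M : R) (a : R -> R) (m : nat) (ev : nat -> R) : Prop :=
  [/\ (forall i : nat, (1 <= i < m)%N -> ev i < ev i.+1),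
      ev m < 0,
      (forall i : nat, (1 <= i <= m)%N -> sing_eigenvalue M a (ev i))
    & (forall lam : R, lam < 0 -> sing_eigenvalue M a lam ->
         exists2 i : nat, (1 <= i <= m)%N & lam = ev i)].

Definition has_m_nodal_sets (m : nat) (w : R -> R) : Prop :=
  exists r : nat -> R,
    [/\ r 0%N = 0, r m = 1,
        (forall i : nat, (i < m)%N -> r i < r i.+1),
        (forall i : nat, (1 <= i <= m)%N -> w (r i) = 0)
      & (forall i : nat, (i < m)%N -> forall t, r i < t < r i.+1 -> w t != 0)].

Definition radial_solution (M : R) (f : R -> R -> R) (m : nat) (w : R -> R) : Prop :=
  [/\ {within `[0, 1], continuous w},
      (fun h => (w h - w 0) / h) @ 0^'+ --> 0,
      (forall t : R, 0 < t < 1 ->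
         [/\ derivable w t 1, derivable (derive1 w) t 1 &
             - derive1 (derive1 w) t - (M - 1) / t * derive1 w t = f t (w t)]),
      w 1 = 0 /\ 0 < w 0
    & has_m_nodal_sets m w].

Definition alpha_p (N : nat) (p : R) : R :=
  Num.max 0 ((p * (N%:R - 2) - (N%:R + 2)) / 2).

Definition M_alpha (N : nat) (alpha : R) : R :=
  2 * (alpha + N%:R) / (alpha + 2).

End Defs.

From HB Require Import structures.
From mathcomp Require Import all_boot all_order all_algebra.
From mathcomp Require Import all_classical all_reals all_analysis.
From mathcomp Require Import ring lra.
Import Order.TTheory GRing.Theory Num.Theory.
Import numFieldNormedType.Exports.
Local Open Scope classical_set_scope.
Local Open Scope ring_scope.

(* Inverting the change of variables M_alpha = 2 + 2(N-2)/(alpha+2) gives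
   Lam_i(alpha) = ((alpha+2)/2)^2 mu_i(M_alpha), where M_alpha -> 2 from the
   right as alpha -> +oo.  The first-order expansion of mu_i at 2, with the
   one-sided derivative mu_i'(2), therefore yields the expansion of Lam_i up
   to o(alpha); differentiating the same identity and using mu_i' -> mu_i'(2)
   at 2^+ yields the expansion of Lam_i'. *)

Section limits_at_pinfty.
Context {R : realType}.

Lemma cvg_to_at_right {T : Type} {F : set_system T} {FF : Filter F}
    (g : T -> R) (x : R) :
  g @ F --> x -> (\forall t \near F, x < g t) -> g @ F --> x^'+.
Proof. by move=> gx gtx P /gx; apply: filterS2 gtx => t xg; exact. Qed.

Lemma near_pinfty_addr_gt0 (b : R) : \forall a \near +oo, 0 < a + b.
Proof.
by apply: filterS (nbhs_pinfty_gt (num_real (- b))) => a; lra.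
Qed.

Lemma cvgy_div_addr (b c : R) : c / (a + b) @[a --> +oo] --> 0.
Proof.
rewrite -(mulr0 c); apply: cvgM; first exact: cvg_cst.
apply/gtr0_cvgV0; [exact: near_pinfty_addr_gt0 | exact: cvg_addrr].
Qed.

Lemma cvgy_div_addr_at_right (b c : R) : 0 < c ->
  c / (a + b) @[a --> +oo] --> 0^'+.
Proof.
move=> c_gt0; apply: cvg_to_at_right; first exact: cvgy_div_addr.
by apply: filterS (near_pinfty_addr_gt0 b) => a; exact: divr_gt0.
Qed.

Lemma is_derive_div_addr (b c a : R) : a + b != 0 ->
  is_derive a 1 (fun x => c / (x + b)) (- c / (a + b) ^+ 2).
Proof.
move=> ab_neq0.
have db : is_derive a 1 (fun x : R => x + b) 1.
  by apply: is_derive_eq; rewrite addr0.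
have dinv := @is_deriveV _ (fun x => x + b) a 1 1 ab_neq0 db.
apply: (is_derive_eq (is_deriveZ c dinv)).
by rewrite /GRing.scale /= mulr1 mulrN mulNr.
Qed.

Lemma cvgy_div_addr0_le (b : R) (g : R -> R) :
  g a / (a + b) @[a --> +oo] --> 0 ->
  forall eps, 0 < eps -> \forall a \near +oo, `|g a| <= eps * a.
Proof.
move=> /cvgrPdist_le g_small eps eps_gt0; near=> a.
have ab_gt0 : 0 < a + b by near: a; exact: near_pinfty_addr_gt0.
have b_le_a : b <= a by near: a; apply: nbhs_pinfty_ge; exact: num_real.
have : `|0 - g a / (a + b)| <= eps / 2.
  by near: a; apply: g_small; exact: divr_gt0.
rewrite sub0r normrN normf_div (gtr0_norm ab_gt0) ler_pdivrMr // => /le_trans.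
by apply; nra.
Unshelve. all: by end_near.
Qed.

End limits_at_pinfty.

Section rescaled_expansion.
Context {R : realType}.
Variables (K d A : R) (f F : R -> R).
Hypothesis K_gt0 : 0 < K.
Hypothesis F_rescaled :
  forall a, A < a -> F a = ((a + 2) / 2) ^+ 2 * f (2 + 2 * K / (a + 2)).
Hypothesis f_right_slope : (fun h => (f (2 + h) - f 2) / h) @ 0^'+ --> d.

Let shift a := 2 * K / (a + 2).
Let slope_err a := (f (2 + shift a) - f 2) / shift a - d.

Let shift_gt0 a : 0 < a + 2 -> 0 < shift a.
Proof. by move=> a2; rewrite divr_gt0 ?mulr_gt0. Qed.

Let slope_err_cvg0 : slope_err a @[a --> +oo] --> 0.
Proof.
apply/subr_cvg0; apply: cvg_comp f_right_slope.
exact: cvgy_div_addr_at_right (mulr_gt0 _ K_gt0).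
Qed.

Let F_sub_quadratic a : A < a -> 0 < a + 2 ->
  F a - (f 2 / 4 * a ^+ 2 + (K * d / 2 + f 2) * a) =
  f 2 + K * d + (a + 2) * (K / 2 * slope_err a).
Proof.
move=> Aa a2; rewrite F_rescaled // /slope_err /shift; field.
by rewrite lt0r_neq0 // lt0r_neq0.
Qed.

Lemma rescaled_sub_quadratic_cvg0 :
  (F a - (f 2 / 4 * a ^+ 2 + (K * d / 2 + f 2) * a)) / (a + 2)
    @[a --> +oo] --> 0.
Proof.
have : (f 2 + K * d) / (a + 2) + K / 2 * slope_err a @[a --> +oo]
    --> 0 + K / 2 * 0.
  apply: cvgD; first exact: cvgy_div_addr.
  by apply: cvgM; [exact: cvg_cst | exact: slope_err_cvg0].
rewrite mulr0 addr0; apply: cvg_trans; apply: near_eq_cvg; near=> a.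
have a2 : 0 < a + 2 by near: a; exact: near_pinfty_addr_gt0.
have Aa : A < a by near: a; apply: nbhs_pinfty_gt; exact: num_real.
by rewrite F_sub_quadratic //; field; rewrite lt0r_neq0.
Unshelve. all: by end_near.
Qed.

Hypothesis f_derivable : \forall M \near 2^'+, derivable f M 1.
Hypothesis f_derive1_cvg : derive1 f M @[M --> 2^'+] --> d.

Let derive1_rescaled a : 0 < a + 2 -> derivable f (2 + shift a) 1 ->
  derive1 (fun x => ((x + 2) / 2) ^+ 2 * f (2 + 2 * K / (x + 2))) a =
  (a + 2) / 2 * f (2 + shift a) - K / 2 * derive1 f (2 + shift a).
Proof.
move=> a2 /derivableP df.
have dshift := @is_derive_div_addr _ 2 (2 * K) a (lt0r_neq0 a2).
(* Instance resolution assembles the product and chain rules from [df] and [dshift]. *)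
have dF : is_derive a 1 (fun x => ((x + 2) / 2) ^+ 2 * f (2 + 2 * K / (x + 2)))
    ((a + 2) / 2 * f (2 + shift a) - K / 2 * 'D_1 f (2 + shift a)).
  by apply: is_derive_eq; rewrite /GRing.scale /=; field; rewrite lt0r_neq0.
by rewrite derive1E derive_val -derive1E.
Qed.

Let shifted_cvg_at_right : 2 + shift a @[a --> +oo] --> 2^'+.
Proof.
apply: cvg_to_at_right.
  rewrite -[X in _ --> X]addr0.
  by apply: cvgD; [exact: cvg_cst | exact: cvgy_div_addr].
by apply: filterS (near_pinfty_addr_gt0 2) => a /shift_gt0; rewrite ltrDl.
Qed.

Let derive1_sub_linear a : A < a -> 0 < a + 2 -> derivable f (2 + shift a) 1 ->
  derive1 F a - (f 2 / 2 * a + (K * d / 2 + f 2)) =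
  K * slope_err a - K / 2 * (derive1 f (2 + shift a) - d).
Proof.
move=> Aa a2 df.
rewrite derive1E (near_eq_derive _ (filterS F_rescaled (lt_nbhsr Aa))).
rewrite -derive1E derive1_rescaled // /slope_err /shift; field.
by rewrite lt0r_neq0 // lt0r_neq0.
Qed.

Lemma rescaled_derive1_sub_linear_cvg0 :
  derive1 F a - (f 2 / 2 * a + (K * d / 2 + f 2)) @[a --> +oo] --> 0.
Proof.
have : K * slope_err a - K / 2 * (derive1 f (2 + shift a) - d) @[a --> +oo]
    --> K * 0 - K / 2 * 0.
  apply: cvgB; first by apply: cvgM; [exact: cvg_cst | exact: slope_err_cvg0].
  apply: cvgM; first exact: cvg_cst.
  by apply/subr_cvg0; exact: cvg_comp shifted_cvg_at_right f_derive1_cvg.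
rewrite !mulr0 subr0; apply: cvg_trans; apply: near_eq_cvg; near=> a.
rewrite derive1_sub_linear //.
- by near: a; apply: nbhs_pinfty_gt; exact: num_real.
- by near: a; exact: near_pinfty_addr_gt0.
- by near: a; exact: shifted_cvg_at_right f_derivable.
Unshelve. all: by end_near.
Qed.

End rescaled_expansion.

Lemma alpha_p_ge0 {R : realType} (N : nat) (p : R) : 0 <= alpha_p N p.
Proof. by rewrite /alpha_p le_max lexx. Qed.

Lemma M_alphaE {R : realType} (N : nat) (a : R) : a + 2 != 0 ->
  M_alpha N a = 2 + 2 * (N%:R - 2) / (a + 2).
Proof. by move=> a2_neq0; rewrite /M_alpha; field. Qed.

Lemma near_right2_subcritical {R : realType} [p : R] : 0 < p ->
  \forall M \near 2^'+, 2 < M /\ p * (M - 2) < M + 2.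
Proof.
move=> p_gt0; near=> M.
have M_gt2 : 2 < M by near: M; exact: nbhs_right_gt.
have M_close : M < 2 + 4 / p.
  by near: M; apply: nbhs_right_lt; rewrite ltrDl divr_gt0.
have : p * (M - 2) < 4 by rewrite mulrC -ltr_pdivlMr //; lra.
by split=> //; lra.
Unshelve. all: by end_near.
Qed.

Theorem proposition6p2 (R : realType) (N m : nat) (p : R)
    (v : R -> R -> R) (mu : nat -> R -> R)
    (u : R -> R -> R) (Lam : nat -> R -> R) (dmu2 : nat -> R) :
  (3 <= N)%N -> 1 < p -> (1 <= m)%N ->
  (* v M = v_M *)
  (forall M : R, 2 <= M -> p * (M - 2) < M + 2 ->
     radial_solution M (fun _ s => `|s| `^ (p - 1) * s) m (v M)) ->
  (* mu_1(M) < ... < mu_m(M) < 0 *)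
  (forall M : R, 2 <= M -> p * (M - 2) < M + 2 ->
     neg_eigenvalues M (fun t => p * `|v M t| `^ (p - 1)) m (fun i => mu i M)) ->
  (* u alpha = radial profile of u_alpha *)
  (forall alpha : R, alpha_p N p < alpha ->
     radial_solution N%:R (fun t s => t `^ alpha * (`|s| `^ (p - 1) * s)) m (u alpha)) ->
  (* Lam_i(alpha) = negative radial eigenvalues *)
  (forall alpha : R, alpha_p N p < alpha ->
     neg_eigenvalues N%:R (fun t => p * t `^ alpha * `|u alpha t| `^ (p - 1)) m
       (fun i => Lam i alpha)) ->
  (* context: mu_i(M_alpha) = (2/(alpha+2))^2 Lam_i(alpha) *)
  (forall (i : nat) (alpha : R), (1 <= i <= m)%N -> alpha_p N p < alpha ->
     mu i (M_alpha N alpha) = (2 / (alpha + 2)) ^+ 2 * Lam i alpha) ->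
  (* context: Lam_i is C^1 on (alpha_p, oo) *)
  (forall i : nat, (1 <= i <= m)%N ->
     forall alpha : R, alpha_p N p < alpha ->
       derivable (Lam i) alpha 1 /\ {for alpha, continuous (derive1 (Lam i))}) ->
  (* context: mu_i is C^1 on {M >= 2, p(M-2) < M+2}, including at M = 2,
     with dmu2 i = mu_i'(2) (one-sided derivative at 2) *)
  (forall i : nat, (1 <= i <= m)%N ->
     [/\ forall M : R, 2 < M -> p * (M - 2) < M + 2 ->
           derivable (mu i) M 1 /\ {for M, continuous (derive1 (mu i))},
         (fun h => (mu i (2 + h) - mu i 2) / h) @ 0^'+ --> dmu2 i
       & derive1 (mu i) x @[x --> 2^'+] --> dmu2 i]) ->
  forall i : nat, (1 <= i <= m)%N ->
    let lam := mu i 2 in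
    let c := (N%:R - 2) * dmu2 i / 2 + lam in
    (forall eps : R, 0 < eps ->
       \forall a \near +oo, `|Lam i a - (lam / 4 * a ^+ 2 + c * a)| <= eps * a) /\
    (derive1 (Lam i) a - (lam / 2 * a + c)) @[a --> +oo] --> 0.
Proof.
move=> N_ge3 p_gt1 _ _ _ _ _ mu_Lam _ mu_reg i im lam c.
have [mu_C1 mu_slope mu'_cvg] := mu_reg i im.
have K_gt0 : 0 < N%:R - 2 :> R.
  by rewrite subr_gt0 (@lt_le_trans _ _ 3%:R) ?ltr_nat ?ler_nat.
have Lam_rescaled a : alpha_p N p < a ->
    Lam i a = ((a + 2) / 2) ^+ 2 * mu i (2 + 2 * (N%:R - 2) / (a + 2)).
  move=> ap_a; have a2_neq0 : a + 2 != 0.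
    by rewrite lt0r_neq0 // addr_gt0 // (le_lt_trans (alpha_p_ge0 N p)).
  have := mu_Lam i a im ap_a; rewrite M_alphaE // => ->.
  by field.
have mu_derivable : \forall M \near 2^'+, derivable (mu i) M 1.
  have := near_right2_subcritical (lt_trans ltr01 p_gt1).
  by apply: filterS => M [M_gt2 pM]; exact: (mu_C1 M M_gt2 pM).1.
split.
- move=> eps; apply: cvgy_div_addr0_le.
  exact: rescaled_sub_quadratic_cvg0 K_gt0 Lam_rescaled mu_slope.
- exact: rescaled_derive1_sub_linear_cvg0 K_gt0 Lam_rescaled mu_slope
    mu_derivable mu'_cvg.
Unshelve. all: by end_near.
Qed.
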